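(* Let $S$ be a semigroup and $a\in S$ an idempotent with $aSa\subseteq\operatorname{Reg}(S)$. Put $P=\{x\in Sa: x\,\mathscr L\,ax\}$ and $\phi:P\to aSa$, $x\mapsto ax$. Then $$\operatorname{MI}(Sa)=\operatorname{RI}(Sa)=\operatorname{MI}(P)=\operatorname{RI}(P)=V_P(a)=V(a)\cap P=V(a)\cap Sa=V(a)a=E(\widehat H^a_a)=a\phi^{-1}.$$
   Context: For a semigroup $T$: $\operatorname{RI}(T)$ is the set of right identities ($u$ with $xu=x$ for all $x\in T$); $\operatorname{MI}(T)$ is the set of mid-identities ($u$ with $xy=xuy$ for all $x,y\in T$); $E(T)$ is the set of idempotents. $V(a)=\{y\in S: a=aya,\ y=yay\}$ and $V_P(a)=\{y\in P: a=aya,\ y=yay\}$. $\widehat H^a_a=\{x\in P: ax \text{ is } \mathscr H\text{-related to } a \text{ in the monoid } aSa\}$. $\mathscr L$ is Green's relation on $S$. *)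

Set Implicit Arguments.
Unset Strict Implicit.

Section Defs.
Variables (T : Type) (mul : T -> T -> T).
Local Infix "*" := mul.

Definition seteq (A B : T -> Prop) : Prop := forall x, A x <-> B x.

Definition Reg (x : T) : Prop := exists y, x = x * y * x.

Definition rightmul (a : T) (x : T) : Prop := exists s, x = s * a.
Definition corner (a : T) (x : T) : Prop := exists s, x = a * s * a.

(* Green's L relation relative to a set U of multipliers:
   x L y iff U^1 x = U^1 y.  With U = S this is Green's L on S;
   with U = aSa (a monoid with identity a) it is Green's L in aSa. *)
Definition greenL (U : T -> Prop) (x y : T) : Prop :=
  (x = y \/ exists s, U s /\ x = s * y) /\ (y = x \/ exists s, U s /\ y = s * x).
Definition greenR (U : T -> Prop) (x y : T) : Prop :=
  (x = y \/ exists s, U s /\ x = y * s) /\ (y = x \/ exists s, U s /\ y = x * s).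
Definition greenH (U : T -> Prop) (x y : T) : Prop := greenL U x y /\ greenR U x y.

Definition allS : T -> Prop := fun _ => True.

Definition Pset (a : T) (x : T) : Prop := rightmul a x /\ greenL allS x (a * x).

Definition RI (U : T -> Prop) (u : T) : Prop := U u /\ forall x, U x -> x * u = x.
Definition MI (U : T -> Prop) (u : T) : Prop :=
  U u /\ forall x y, U x -> U y -> x * y = x * u * y.
Definition Eset (U : T -> Prop) (e : T) : Prop := U e /\ e * e = e.

Definition Vinv (a : T) (y : T) : Prop := a = a * y * a /\ y = y * a * y.
Definition VinvP (a : T) (y : T) : Prop := Pset a y /\ a = a * y * a /\ y = y * a * y.

Definition inter (A B : T -> Prop) (x : T) : Prop := A x /\ B x.

Definition Vinv_a (a : T) (x : T) : Prop := exists y, Vinv a y /\ x = y * a.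

Definition Hhat (a : T) (x : T) : Prop := Pset a x /\ greenH (corner a) (a * x) a.

Definition phi_preim (a : T) (x : T) : Prop := Pset a x /\ a * x = a.

End Defs.

From Stdlib Require Import Setoid.
Set Implicit Arguments.
Unset Strict Implicit.

(* Every one of the ten sets equals K = {u in Sa : au = a}.  Elements u of Sa
   satisfy ua = u, so au = a is exactly what makes u a right identity, indeed a
   mid-identity, of Sa; such u satisfy aua = a, uau = u and u = ua, and u L au = a
   is witnessed by u = sa and a = au.  Conversely each set forces au = a by testing
   its defining property against a itself. *)
Section Corner.
Variables (T : Type) (mul : T -> T -> T).
Local Infix "*" := mul.
Hypothesis mulA : forall x y z, x * (y * z) = (x * y) * z.
Variables (a : T).
Hypothesis a_idem : a * a = a.

Definition Sa_fixing_a (u : T) : Prop := rightmul mul a u /\ a * u = a.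

Lemma seteq_via (A B C : T -> Prop) : seteq A C -> seteq B C -> seteq A B.
Proof. intros HA HB x. split; intro H; [apply HB, HA, H | apply HA, HB, H]. Qed.

Lemma rightmul_mulr_a (u : T) : rightmul mul a u -> u * a = u.
Proof. intros [s ->]. rewrite <- mulA, a_idem. reflexivity. Qed.

Lemma rightmul_a : rightmul mul a a.
Proof. exists a. symmetry. exact a_idem. Qed.

Lemma Pset_rightmul (u : T) : Pset mul a u -> rightmul mul a u.
Proof. intros [H _]. exact H. Qed.

Lemma Pset_a : Pset mul a a.
Proof. split; [exact rightmul_a | split; left; [symmetry |]; exact a_idem]. Qed.

Lemma Sa_fixing_a_idem (u : T) : Sa_fixing_a u -> u * u = u.
Proof.
  intros [[s Hs] Hau]. rewrite Hs at 1. rewrite <- mulA, Hau. symmetry. exact Hs.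
Qed.

Lemma Sa_fixing_a_Pset (u : T) : Sa_fixing_a u -> Pset mul a u.
Proof.
  intros [[s Hs] Hau]. split; [exists s; exact Hs |].
  split; right; [exists s | exists a]; split; try exact I.
  - rewrite Hau. exact Hs.
  - reflexivity.
Qed.

Lemma Sa_fixing_a_Vinv (u : T) : Sa_fixing_a u -> Vinv mul a u.
Proof.
  intros Hu. pose proof (Sa_fixing_a_idem Hu) as Huu. destruct Hu as [HSa Hau].
  split.
  - rewrite Hau, a_idem. reflexivity.
  - rewrite (rightmul_mulr_a HSa). symmetry. exact Huu.
Qed.

Section Between.
Variable U : T -> Prop.
Hypotheses (U_a : U a) (U_Sa : forall u, U u -> rightmul mul a u)
  (K_U : forall u, Sa_fixing_a u -> U u).

Lemma Sa_fixing_a_mulr (u x : T) : Sa_fixing_a u -> U x -> x * u = x.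
Proof.
  intros [_ Hau] Hx. destruct (U_Sa Hx) as [s ->]. rewrite <- mulA, Hau. reflexivity.
Qed.

Lemma RI_between : seteq (RI mul U) Sa_fixing_a.
Proof.
  intros u; split.
  - intros [Hu H]. split; [exact (U_Sa Hu) | exact (H a U_a)].
  - intros Hu. split; [exact (K_U Hu) |]. intros x Hx. exact (Sa_fixing_a_mulr Hu Hx).
Qed.

Lemma MI_between : seteq (MI mul U) Sa_fixing_a.
Proof.
  intros u; split.
  - intros [Hu H]. split; [exact (U_Sa Hu) |]. specialize (H a a U_a U_a).
    rewrite a_idem, <- mulA, (rightmul_mulr_a (U_Sa Hu)) in H. symmetry. exact H.
  - intros Hu. split; [exact (K_U Hu) |]. intros x y Hx _.
    rewrite (Sa_fixing_a_mulr Hu Hx). reflexivity.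
Qed.

End Between.

Lemma MI_rightmul : seteq (MI mul (rightmul mul a)) Sa_fixing_a.
Proof. apply MI_between; [exact rightmul_a | trivial | intros u Hu; exact (proj1 Hu)]. Qed.

Lemma RI_rightmul : seteq (RI mul (rightmul mul a)) Sa_fixing_a.
Proof. apply RI_between; [exact rightmul_a | trivial | intros u Hu; exact (proj1 Hu)]. Qed.

Lemma MI_Pset : seteq (MI mul (Pset mul a)) Sa_fixing_a.
Proof. apply MI_between; [exact Pset_a | exact Pset_rightmul | exact Sa_fixing_a_Pset]. Qed.

Lemma RI_Pset : seteq (RI mul (Pset mul a)) Sa_fixing_a.
Proof. apply RI_between; [exact Pset_a | exact Pset_rightmul | exact Sa_fixing_a_Pset]. Qed.

Lemma Vinv_rightmul : seteq (inter (Vinv mul a) (rightmul mul a)) Sa_fixing_a.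
Proof.
  intros u; split.
  - intros [[Haua _] Hu]. split; [exact Hu |]. rewrite Haua at 2.
    rewrite <- mulA, (rightmul_mulr_a Hu). reflexivity.
  - intros Hu. split; [exact (Sa_fixing_a_Vinv Hu) | apply Hu].
Qed.

Lemma Vinv_Pset : seteq (inter (Vinv mul a) (Pset mul a)) Sa_fixing_a.
Proof.
  intros u; split.
  - intros [H Hu]. apply Vinv_rightmul. split; [exact H | exact (Pset_rightmul Hu)].
  - intros Hu. split; [exact (Sa_fixing_a_Vinv Hu) | exact (Sa_fixing_a_Pset Hu)].
Qed.

Lemma VinvP_eq : seteq (VinvP mul a) Sa_fixing_a.
Proof.
  intros u. pose proof (Vinv_Pset u). unfold VinvP, inter, Vinv in *. tauto.
Qed.

Lemma Vinv_a_eq : seteq (Vinv_a mul a) Sa_fixing_a.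
Proof.
  intros u; split.
  - intros [y [[Haya _] ->]]. split; [exists y; reflexivity |].
    rewrite mulA. symmetry. exact Haya.
  - intros Hu. exists u. split; [exact (Sa_fixing_a_Vinv Hu) |].
    symmetry. apply rightmul_mulr_a, Hu.
Qed.

Lemma idem_mull_of_rdvd (e x s : T) : e * e = e -> x = e * s -> e * x = x.
Proof. intros He Hx. rewrite Hx at 1. rewrite mulA, He. symmetry. exact Hx. Qed.

Lemma mull_a_idem (u : T) : rightmul mul a u -> u * u = u -> (a * u) * (a * u) = a * u.
Proof.
  intros HSa Huu. rewrite mulA, <- (mulA a u a), (rightmul_mulr_a HSa), <- mulA, Huu.
  reflexivity.
Qed.

Lemma Eset_Hhat : seteq (Eset mul (Hhat mul a)) Sa_fixing_a.
Proof.
  intros u; split.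
  - intros [[Hu [_ [_ HR]]] Huu]. pose proof (Pset_rightmul Hu) as HSa.
    split; [exact HSa |].
    destruct HR as [Heq | [s [_ Hs]]]; [symmetry; exact Heq |].
    (* a lies in (au)S with au idempotent, so a = (au)a = aua = au. *)
    pose proof (idem_mull_of_rdvd (mull_a_idem HSa Huu) Hs) as Hau.
    rewrite <- mulA, (rightmul_mulr_a HSa) in Hau. exact Hau.
  - intros Hu. split; [| exact (Sa_fixing_a_idem Hu)].
    split; [exact (Sa_fixing_a_Pset Hu) |].
    destruct Hu as [_ ->]. split; split; left; reflexivity.
Qed.

Lemma phi_preim_eq : seteq (phi_preim mul a) Sa_fixing_a.
Proof.
  intros u; split.
  - intros [Hu H]. split; [exact (Pset_rightmul Hu) | exact H].
  - intros Hu. split; [exact (Sa_fixing_a_Pset Hu) | apply Hu].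
Qed.

End Corner.

Theorem proposition3p23 (T : Type) (mul : T -> T -> T)
  (mulA : forall x y z, mul x (mul y z) = mul (mul x y) z)
  (a : T) (a_idem : mul a a = a)
  (hreg : forall x, corner mul a x -> Reg mul x) :
  let Sa := rightmul mul a in
  let P := Pset mul a in
  seteq (MI mul Sa) (RI mul Sa) /\
  seteq (RI mul Sa) (MI mul P) /\
  seteq (MI mul P) (RI mul P) /\
  seteq (RI mul P) (VinvP mul a) /\
  seteq (VinvP mul a) (inter (Vinv mul a) P) /\
  seteq (inter (Vinv mul a) P) (inter (Vinv mul a) Sa) /\
  seteq (inter (Vinv mul a) Sa) (Vinv_a mul a) /\
  seteq (Vinv_a mul a) (Eset mul (Hhat mul a)) /\
  seteq (Eset mul (Hhat mul a)) (phi_preim mul a).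
Proof.
  cbv zeta.
  pose proof (MI_rightmul mulA a_idem). pose proof (RI_rightmul mulA a_idem).
  pose proof (MI_Pset mulA a_idem). pose proof (RI_Pset mulA a_idem).
  pose proof (VinvP_eq mulA a_idem). pose proof (Vinv_Pset mulA a_idem).
  pose proof (Vinv_rightmul mulA a_idem). pose proof (Vinv_a_eq mulA a_idem).
  pose proof (Eset_Hhat mulA a_idem). pose proof (phi_preim_eq mul a).
  repeat apply conj; eapply seteq_via; eassumption.
Qed.
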